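(* Let $d\ge 1$ and let $\mathbf{X}=(X_1,\dots,X_d)$ and $\mathbf{Y}=(Y_1,\dots,Y_d)$ be random vectors on $\mathbb{R}^d$ with distribution functions $F$ and $G$, each satisfying condition $(\mathcal{H})$. Then $F=G$ if and only if $\|\mathbf{x}\|_{\mathbf{X}}=\|\mathbf{x}\|_{\mathbf{Y}}$ for all $\mathbf{x}\in\mathbb{R}^{d+1}$.
   Context: Condition $(\mathcal{H})$ on a random vector $\mathbf{X}=(X_1,\dots,X_d)$: each $X_i$ is almost surely nonnegative with $0<E(X_i)<\infty$. For such $\mathbf{X}$ and $\mathbf{x}=(x_0,x_1,\dots,x_d)\in\mathbb{R}^{d+1}$, define $\|\mathbf{x}\|_{\mathbf{X}}:=E\big(\max(|x_0|,|x_1|X_1,\dots,|x_d|X_d)\big)$. *)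

From HB Require Import structures.
From mathcomp Require Import all_boot all_order all_algebra.
From mathcomp Require Import all_classical all_reals all_analysis.
Set Implicit Arguments. Unset Strict Implicit. Unset Printing Implicit Defensive.
Import Order.TTheory GRing.Theory Num.Theory.
Local Open Scope ring_scope.
Local Open Scope classical_set_scope.

Definition random_vector {d0} {T : measurableType d0} {R : realType} (d : nat)
  (X : 'I_d -> T -> R) : Prop :=
  forall i, measurable_fun setT (X i).

Definition condH {d0} {T : measurableType d0} {R : realType} (P : probability T R)
  (d : nat) (X : 'I_d -> T -> R) : Prop :=
  forall i, {ae P, forall w, 0 <= X i w} /\
            (0 < 'E_P[X i])%E /\ ('E_P[X i] < +oo)%E.

Definition distr_fun {d0} {T : measurableType d0} {R : realType} (P : probability T R)
  (d : nat) (X : 'I_d -> T -> R) (t : 'I_d -> R) : \bar R :=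
  P [set w | forall i, X i w <= t i].

(* ||x||_X = E( max(|x_0|, |x_1| X_1, ..., |x_d| X_d) ) for x = (x_0,...,x_d),
   x_0 = x ord0 and x_i = x (lift ord0 (i-1)). *)
Definition Xnorm {d0} {T : measurableType d0} {R : realType} (P : probability T R)
  (d : nat) (X : 'I_d -> T -> R) (x : 'I_d.+1 -> R) : \bar R :=
  'E_P[fun w => \big[Num.max/`|x ord0|]_(i < d) (`|x (lift ord0 i)| * X i w)].

(* Write W_a := max_i |a_i| X_i, so that ||(c, a)||_X = E max(|c|, W_a).  The
   events {W_a <= r} are increasing unions of boxes {X <= t}, so F determines
   their probabilities, and hence the norm, since for V := max(|c|, W_a) we
   have E V = int_0^oo (1 - P(V <= r)) dr.
   Conversely, c |-> E max(c, W_a) has right derivative P(W_a <= 1) at c = 1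
   (dominated convergence), and {X <= t} = {W_(1/t) <= 1} for t > 0;
   right-continuity of F and X >= 0 a.s. recover F everywhere. *)

From HB Require Import structures.
From mathcomp Require Import all_boot all_order all_algebra.
From mathcomp Require Import all_classical all_reals all_analysis.
From mathcomp Require Import measurable_realfun.
Import Order.TTheory GRing.Theory Num.Theory.
Local Open Scope ring_scope.
Local Open Scope classical_set_scope.

Lemma bigmax_idx_max {disp} {T : orderType disp} {I : Type} {r : seq I}
    {P : pred I} {F : I -> T} {x y : T} : (y <= x)%O ->
  \big[Order.max/x]_(i <- r | P i) F i =
  Order.max x (\big[Order.max/y]_(i <- r | P i) F i).
Proof.
move=> yx; elim/big_rec2: _ => [|i u v _ ->]; first by rewrite max_l.
by rewrite maxCA.
Qed.

Lemma measurable_le_set d (T : measurableType d) (R : realType) (f : T -> R)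
    (r : R) : measurable_fun setT f -> measurable [set w | f w <= r].
Proof.
move=> mf; rewrite -[X in measurable X]setTI.
have := mf measurableT _ (measurable_itv `]-oo, r]%R).
by congr measurable; apply/seteqP; split => w /=; rewrite in_itv.
Qed.

Section max_shift.
Context {R : realDomainType} (b e y : R).
Hypothesis e_ge0 : 0 <= e.

Lemma max_shift_sub_itv : 0 <= Num.max (b + e) y - Num.max b y <= e.
Proof.
rewrite subr_ge0 lerBlDl le_max2 ?lerDl //= ge_max lerD2r le_max lexx.
by rewrite ler_wpDr // le_max lexx orbT.
Qed.

Lemma max_shift_sub_small : y <= b -> Num.max (b + e) y - Num.max b y = e.
Proof.
move=> yb; rewrite !max_l ?(le_trans yb) ?lerDl //.
by rewrite addrC addKr.
Qed.

Lemma max_shift_sub_large : b + e <= y -> Num.max (b + e) y - Num.max b y = 0.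
Proof. by move=> bey; rewrite !max_r ?subrr // (le_trans _ bey) ?lerDl. Qed.

End max_shift.

Definition vcons {R : Type} {n : nat} (c : R) (a : 'I_n -> R) (j : 'I_n.+1) :=
  if unlift ord0 j is Some i then a i else c.

Lemma vconsK {R : Type} {n : nat} (x : 'I_n.+1 -> R) :
  vcons (x ord0) (fun i => x (lift ord0 i)) = x.
Proof. by apply/funext => j; rewrite /vcons; case: unliftP => [i ->|->]. Qed.

Section scaled_max.
Context {dT : measure_display} {T : measurableType dT} {R : realType}
  (P : probability T R) {n : nat} (X : 'I_n -> T -> R).
Hypothesis mX : random_vector X.

Definition scaled_max (a : 'I_n -> R) (w : T) :=
  \big[Num.max/0]_(i < n) (`|a i| * X i w).

Definition norm_integrand (c : R) (a : 'I_n -> R) (w : T) :=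
  Num.max `|c| (scaled_max a w).

Lemma scaled_max_le a w r : 0 <= r ->
  scaled_max a w <= r <-> forall i, `|a i| * X i w <= r.
Proof.
by move=> r0; split => [/bigmax_leP[_ h] i|h]; [exact: h|exact/bigmax_leP].
Qed.

Lemma measurable_scaled_max a : measurable_fun setT (scaled_max a).
Proof.
rewrite /scaled_max; elim: (index_enum _) => [|j s IH].
  by under eq_fun do rewrite big_nil; exact: measurable_cst.
under eq_fun do rewrite big_cons.
by apply: measurable_maxr => //; apply: measurable_funM.
Qed.

Lemma norm_integrand_ge0 c a w : 0 <= norm_integrand c a w.
Proof. by rewrite le_max normr_ge0. Qed.

Lemma measurable_norm_integrand c a :
  measurable_fun setT (norm_integrand c a).
Proof. exact/measurable_maxr/measurable_scaled_max. Qed.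

Lemma Xnorm_vcons c a : Xnorm P X (vcons c a) = 'E_P[norm_integrand c a]%E.
Proof.
rewrite /Xnorm /vcons unlift_none; congr (expectation P _); apply/funext => w.
rewrite (bigmax_idx_max (normr_ge0 _)).
by congr Num.max; apply: eq_bigr => i _; rewrite liftK.
Qed.

Lemma measurable_distr_event t : measurable [set w | forall i, X i w <= t i].
Proof.
rewrite (_ : [set w | _] = \bigcap_(i in setT) [set w | X i w <= t i]).
  by apply: fin_bigcap_measurable => // i _; exact: measurable_le_set.
by apply/seteqP; split => [w h i _|w h i]; exact: h.
Qed.

(* Coordinates with [a i = 0] are unconstrained; they are pushed to [+oo]. *)
Definition corner (a : 'I_n -> R) (r : R) (m : nat) (i : 'I_n) :=
  if a i == 0 then m%:R else r / `|a i|.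

Lemma scaled_max_le_bigcup a r : 0 <= r ->
  [set w | scaled_max a w <= r] =
  \bigcup_m [set w | forall i, X i w <= corner a r m i].
Proof.
move=> r0; apply/seteqP; split => w /=.
  move/(scaled_max_le _ _ _ r0) => h.
  exists (\max_(i < n) Num.bound (X i w))%N => // i.
  rewrite /corner; case: ifP => [_|/negbT ai0].
    apply/ltW/(lt_le_trans (unstable.ltr_bound _)).
    by rewrite ler_nat (leq_bigmax i).
  by rewrite ler_pdivlMr ?normr_gt0 // mulrC.
move=> [m _ h]; apply/(scaled_max_le _ _ _ r0) => i.
move: (h i); rewrite /corner; case: ifP => [/eqP -> _|/negbT ai0].
  by rewrite normr0 mul0r.
by rewrite ler_pdivlMr ?normr_gt0 // mulrC.
Qed.

Lemma cvg_distr_fun_corner a r : 0 <= r ->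
  distr_fun P X (corner a r m) @[m --> \oo] --> P [set w | scaled_max a w <= r].
Proof.
move=> r0; rewrite scaled_max_le_bigcup //; apply: nondecreasing_cvg_mu.
- by move=> m; exact: measurable_distr_event.
- by rewrite -scaled_max_le_bigcup //; exact/measurable_le_set/measurable_scaled_max.
- move=> m m' mm'; apply/subsetPset => w /= h i; apply: (le_trans (h i)).
  by rewrite /corner; case: ifP; rewrite // ler_nat.
Qed.

Lemma prob_norm_integrand_gt c a r : P [set w | r < norm_integrand c a w] =
  (1 - (if (`|c| <= r)%R then P [set w | (scaled_max a w <= r)%R] else 0))%E.
Proof.
have -> : [set w | r < norm_integrand c a w] = ~` [set w | norm_integrand c a w <= r].
  by apply/seteqP; split => w /=; rewrite ltNge => /negP.
rewrite probability_setC; last exact/measurable_le_set/measurable_norm_integrand.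
congr (_ - _)%E; case: ifP => cr.
  by congr (P _); apply/seteqP; split => w /=; rewrite ge_max cr.
rewrite -(measure0 P); congr (P _).
by apply/seteqP; split => w //=; rewrite ge_max cr.
Qed.

Lemma Xnorm_vcons_ccdf c a : Xnorm P X (vcons c a) =
  (\int[lebesgue_measure]_(r in `[0%R, +oo[)
     (1 - (if (`|c| <= r)%R then P [set w | (scaled_max a w <= r)%R] else 0)))%E.
Proof.
pose V : {RV P >-> R} := mfun_Sub (mem_set (measurable_norm_integrand c a)).
rewrite Xnorm_vcons (@ge0_expectation_ccdf _ _ _ P V (norm_integrand_ge0 c a)).
apply: eq_integral => r _; rewrite -prob_norm_integrand_gt.
by congr (P _); apply/seteqP; split => w /=; rewrite in_itv /= andbT.
Qed.

Lemma distr_fun_scaled_max t : (forall i, 0 < t i) ->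
  distr_fun P X t = P [set w | scaled_max (fun i => (t i)^-1) w <= 1].
Proof.
move=> t_gt0; have le_inv i w : (`|(t i)^-1| * X i w <= 1) = (X i w <= t i).
  by rewrite gtr0_norm ?invr_gt0 // mulrC ler_pdivrMr // mul1r.
congr (P _); apply/seteqP; split => w /=.
  by move=> Xt; apply/scaled_max_le => // i; rewrite le_inv.
by move/scaled_max_le => /(_ ler01) Xt i; rewrite -le_inv.
Qed.

Lemma cvg_distr_fun_right t :
  distr_fun P X (fun i => t i + m.+1%:R^-1) @[m --> \oo] --> distr_fun P X t.
Proof.
rewrite /distr_fun; have -> : [set w | forall i, X i w <= t i] =
    \bigcap_m [set w | forall i, X i w <= t i + m.+1%:R^-1].
  apply/seteqP; split => w /= Xt.
    by move=> m _ i; rewrite (le_trans (Xt i)) // lerDl.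
  move=> i; rewrite leNgt; apply/negP => tX.
  have tX_gt0 : 0 < X i w - t i by rewrite subr_gt0.
  have [m _ /(_ m (leqnn m)) hm] := near_infty_natSinv_lt (PosNum tX_gt0).
  by move: (Xt m I i); rewrite leNgt -ltrBrDl hm.
apply: nonincreasing_cvg_mu.
- rewrite (le_lt_trans (probability_le1 _ _)) ?ltry //.
  exact: measurable_distr_event.
- by move=> m; exact: measurable_distr_event.
- by apply: bigcapT_measurable => m; exact: measurable_distr_event.
- move=> m m' mm'; apply/subsetPset => w /= Xt i; apply: (le_trans (Xt i)).
  by rewrite lerD2l lef_pV2 ?posrE // ler_nat.
Qed.

Hypothesis HX : condH P X.

Lemma integrable_X i : P.-integrable setT (EFin \o X i).
Proof.
have [X_ge0 [_ EX_lty]] := HX i.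
have mXi : measurable_fun setT (EFin \o X i) by exact/measurable_EFinP.
apply/integrableP; split => //.
rewrite (@ae_eq_integral _ _ _ _ _ (EFin \o X i)) //.
- by move: EX_lty; rewrite unlock.
- exact: measurableT_comp.
- by apply: filterS X_ge0 => w /= Xw _; rewrite ger0_norm.
Qed.

Lemma integrable_norm_integrand c a :
  P.-integrable setT (EFin \o norm_integrand c a).
Proof.
pose g w := (`|c| + \sum_(i < n) `|a i| * `|X i w|)%R.
have sum_ge0 w : 0 <= \sum_(i < n) `|a i| * `|X i w|.
  by apply: sumr_ge0 => i _; rewrite mulr_ge0.
apply: (@le_integrable _ _ _ _ _ measurableT _ (EFin \o g)).
- exact/measurable_EFinP/measurable_norm_integrand.
- move=> w _ /=; rewrite lee_fin.
  rewrite ger0_norm ?norm_integrand_ge0 // ger0_norm ?addr_ge0 //.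
  rewrite ge_max lerDl sum_ge0 /= ler_wpDl //.
  apply/(scaled_max_le _ _ _ (sum_ge0 w)) => i.
  rewrite (bigD1 i) //= (le_trans (ler_wpM2l _ (real_ler_norm _))) ?num_real //.
  by rewrite lerDl sumr_ge0 // => j _; rewrite mulr_ge0.
- have -> : EFin \o g = fun w => (`|c|%:E + \sum_(i < n) `|a i|%:E * `|X i w|%:E)%E.
    by apply/funext => w; rewrite /= EFinD sumEFin.
  apply: integrableD => //; first exact: finite_measure_integrable_cst.
  apply: integrable_sum => // i _.
  exact/integrableZl/integrable_norm/integrable_X.
Qed.

Definition norm_dq (a : 'I_n -> R) (m : nat) (w : T) :=
  m.+1%:R * (norm_integrand (1 + m.+1%:R^-1) a w - norm_integrand 1 a w).

Lemma norm_dqE a m w : norm_dq a m w =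
  m.+1%:R * (Num.max (1 + m.+1%:R^-1) (scaled_max a w) -
             Num.max 1 (scaled_max a w)).
Proof. by rewrite /norm_dq /norm_integrand normr1 ger0_norm // addr_ge0. Qed.

Lemma norm_dq_itv a m w : 0 <= norm_dq a m w <= 1.
Proof.
have e_ge0 : 0 <= m.+1%:R^-1 :> R by rewrite invr_ge0.
have /andP[dq_ge0 dq_le] := max_shift_sub_itv 1 _ (scaled_max a w) e_ge0.
by rewrite norm_dqE mulr_ge0 //= (le_trans (ler_wpM2l _ dq_le)) // mulfV.
Qed.

Lemma measurable_norm_dq a m : measurable_fun setT (norm_dq a m).
Proof.
apply: measurable_funM => //.
by apply: measurable_funB; exact: measurable_norm_integrand.
Qed.

Lemma Xnorm_dq a m :
  ((m.+1%:R : R)%:E *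
     (Xnorm P X (vcons (1 + m.+1%:R^-1)%R a) - Xnorm P X (vcons 1%R a)) =
   \int[P]_w (norm_dq a m w)%:E)%E.
Proof.
rewrite !Xnorm_vcons unlock -integralB_EFin ?integrable_norm_integrand //.
rewrite -integralZl //.
by apply: integrableB => //; exact: integrable_norm_integrand.
Qed.

Lemma cvg_norm_dq a w :
  (norm_dq a m w)%:E @[m --> \oo] --> (\1_[set w | scaled_max a w <= 1] w)%:E.
Proof.
rewrite indicE; apply: cvg_near_cst; case: (leP (scaled_max a w) 1) => W_le1.
  rewrite mem_set //; near=> m.
  by rewrite norm_dqE max_shift_sub_small // mulfV.
have W_gt0 : 0 < scaled_max a w - 1 by rewrite subr_gt0.
rewrite memNset /=; last by apply/negP; rewrite -ltNge.
near=> m; rewrite norm_dqE max_shift_sub_large ?mulr0 // -lerBrDl ltW //.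
by near: m; exact: (near_infty_natSinv_lt (PosNum W_gt0)).
Unshelve. all: by end_near.
Qed.

Lemma cvg_Xnorm_dq a :
  ((m.+1%:R : R)%:E *
     (Xnorm P X (vcons (1 + m.+1%:R^-1)%R a) - Xnorm P X (vcons 1%R a)))%E
  @[m --> \oo] --> P [set w | scaled_max a w <= 1].
Proof.
under eq_fun do rewrite Xnorm_dq.
rewrite -[X in P X]setIT -integral_indic //; last first.
  exact/measurable_le_set/measurable_scaled_max.
apply: (@dominated_cvg _ _ _ _ _ measurableT _ _ (cst 1%:E)) => //.
- by move=> m; exact/measurable_EFinP/measurable_norm_dq.
- by move=> w _; exact: cvg_norm_dq.
- exact: finite_measure_integrable_cst.
- move=> m w _; have /andP[dq_ge0 dq_le1] := norm_dq_itv a m w.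
  by rewrite /= lee_fin ger0_norm.
Qed.

Lemma distr_fun_eq0 t i : t i < 0 -> distr_fun P X t = 0%E.
Proof.
move=> ti0; have [X_ge0 _] := HX i.
apply/negligibleP; first exact: measurable_distr_event.
apply: negligibleS X_ge0 => w /= Xt Xi_ge0.
by have := le_lt_trans (le_trans Xi_ge0 (Xt i)) ti0; rewrite ltxx.
Qed.

End scaled_max.

Lemma cvg_eq_limit {R : realFieldType} {u v : nat -> \bar R} {l1 l2 : \bar R} :
  u @ \oo --> l1 -> v @ \oo --> l2 -> u = v -> l1 = l2.
Proof. by move=> ul1 vl2 uv; rewrite uv in ul1; exact: cvg_unique ul1 vl2. Qed.

Section characterization.
Context {R : realType} {n : nat}
  {d1 : measure_display} {T1 : measurableType d1} (P1 : probability T1 R)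
  {d2 : measure_display} {T2 : measurableType d2} (P2 : probability T2 R)
  (X : 'I_n -> T1 -> R) (Y : 'I_n -> T2 -> R).
Hypotheses (mX : random_vector X) (mY : random_vector Y).

Lemma Xnorm_eq_of_distr_fun_eq : distr_fun P1 X = distr_fun P2 Y ->
  forall x : 'I_n.+1 -> R, Xnorm P1 X x = Xnorm P2 Y x.
Proof.
move=> FG x; rewrite -[x]vconsK.
rewrite (Xnorm_vcons_ccdf _ _ mX) (Xnorm_vcons_ccdf _ _ mY).
apply: eq_integral => r; rewrite inE /= in_itv /= andbT => r_ge0.
case: ifP => // _; congr (1 - _)%E.
apply: cvg_eq_limit (cvg_distr_fun_corner _ _ mX _ _ r_ge0)
  (cvg_distr_fun_corner _ _ mY _ _ r_ge0) _.
by rewrite FG.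
Qed.

Hypotheses (HX : condH P1 X) (HY : condH P2 Y).

Lemma distr_fun_eq_of_Xnorm_eq :
  (forall x : 'I_n.+1 -> R, Xnorm P1 X x = Xnorm P2 Y x) ->
  distr_fun P1 X = distr_fun P2 Y.
Proof.
move=> XY; have W_eq a :
    P1 [set w | scaled_max X a w <= 1] = P2 [set w | scaled_max Y a w <= 1].
  apply: cvg_eq_limit (cvg_Xnorm_dq _ _ mX HX a) (cvg_Xnorm_dq _ _ mY HY a) _.
  by apply/funext => m; rewrite !XY.
apply/funext => t; have [t_ge0|/existsNP[i /negP]] := pselect (forall i, 0 <= t i).
  apply: cvg_eq_limit (cvg_distr_fun_right _ _ mX t) (cvg_distr_fun_right _ _ mY t) _.
  apply/funext => m; have tm_gt0 i : 0 < t i + m.+1%:R^-1 by rewrite ltr_wpDl.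
  by rewrite !distr_fun_scaled_max.
rewrite -ltNge => ti0.
by rewrite (distr_fun_eq0 _ _ mX HX _ _ ti0) (distr_fun_eq0 _ _ mY HY _ _ ti0).
Qed.

End characterization.

Theorem theorem2p2 (R : realType) (d : nat) (hd : (0 < d)%N)
  (d1 : measure_display) (T1 : measurableType d1) (P1 : probability T1 R)
  (d2 : measure_display) (T2 : measurableType d2) (P2 : probability T2 R)
  (X : 'I_d -> T1 -> R) (Y : 'I_d -> T2 -> R)
  (hX : random_vector X) (hY : random_vector Y)
  (HX : condH P1 X) (HY : condH P2 Y) :
  distr_fun P1 X = distr_fun P2 Y <->
  (forall x : 'I_d.+1 -> R, Xnorm P1 X x = Xnorm P2 Y x).
Proof.
split; first exact: Xnorm_eq_of_distr_fun_eq.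
exact: distr_fun_eq_of_Xnorm_eq.
Qed.
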